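(* Let $L\subseteq B_i$ be an SINR-feasible set of links contained in a single bucket $B_i$. Then there is a constant $C$ depending only on $\alpha,\beta,\varepsilon$ such that for every $e\in B_i$, \[\sum_{\{e'\in L:d_{e'}\ge d_e\}}\bar a_e(e')\le C.\]
   Context: Constants: $\alpha\ge0$, $N>0$, $\beta>0$. Nodes lie in the Euclidean plane. A link is $e=(s_e,r_e,P_e)$ with transmitter, receiver, power $P_e>0$; $\mathcal{L}$ is the set of links. $d_e=d(s_e,r_e)$, $d_{e'e}=d(s_{e'},r_e)$, $S_e=P_e/d_e^\alpha$, $S_{e'e}=P_{e'}/d_{e'e}^\alpha$, $\gamma_e=\beta S_e/(S_e-\beta N)$. Affectances: $\hat a_{e'}(e)=S_{e'e}/S_e$, $a_{e'}(e)=\gamma_e\hat a_{e'}(e)$, $\bar a_{e'}(e)=\min\{1,a_{e'}(e)\}$. $L$ is SINR-feasible if $S_e/(N+\sum_{e'\in L\setminus\{e\}}S_{e'e})\ge\beta$ for all $e\in L$. Buckets: $S_{\min}=\min_{e\in\mathcal{L}}S_e$, $B_i=\{e\in\mathcal{L}:2^iS_{\min}\le S_e<2^{i+1}S_{\min}\}$. Standing assumption: there is a constant $\varepsilon>0$ with $S_e/N\ge(1+\varepsilon)\beta$ for all $e\in\mathcal{L}$. *)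

From HB Require Import structures.
From mathcomp Require Import all_boot all_order all_algebra.
From mathcomp Require Import all_classical all_reals all_analysis.
Set Implicit Arguments. Unset Strict Implicit. Unset Printing Implicit Defensive.
Import Order.TTheory GRing.Theory Num.Theory.
Local Open Scope ring_scope.

Section SINR.
Variables (R : realType) (T : finType).
(* constants alpha (path loss), beta (threshold), N (noise) *)
Variables (alpha beta N : R).
(* links are the elements of the finite type T: transmitter s e,
   receiver r e (points of the Euclidean plane R*R), power P e *)
Variables (s r : T -> R * R) (P : T -> R).

Definition dist (p q : R * R) : R :=
  Num.sqrt ((p.1 - q.1) ^+ 2 + (p.2 - q.2) ^+ 2).

Definition dlen (e : T) : R := dist (s e) (r e).
Definition Ssig (e : T) : R := P e / (dlen e `^ alpha).
Definition Sint (e' e : T) : R := P e' / (dist (s e') (r e) `^ alpha).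
Definition gammae (e : T) : R := beta * Ssig e / (Ssig e - beta * N).
Definition ahat (e' e : T) : R := Sint e' e / Ssig e.
Definition aff (e' e : T) : R := gammae e * ahat e' e.
Definition abar (e' e : T) : R := Num.min 1 (aff e' e).

Definition feasible (L : {set T}) : Prop :=
  forall e, e \in L ->
    beta <= Ssig e / (N + \sum_(e' in L | e' != e) Sint e' e).

(* S_min = min over all links of S_e (0 if there are no links) *)
Definition Smin : R :=
  if [pick j : T] is Some j0 then \big[Num.min/Ssig j0]_(j : T) Ssig j else 0.

Definition bucket (i : nat) : {set T} :=
  [set e | (2 ^+ i * Smin <= Ssig e) && (Ssig e < 2 ^+ i.+1 * Smin)].

End SINR.

From HB Require Import structures.
From mathcomp Require Import all_boot all_order all_algebra.
From mathcomp Require Import all_classical all_reals all_analysis.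
From mathcomp Require Import ring lra.
Set Implicit Arguments. Unset Strict Implicit. Unset Printing Implicit Defensive.
Import Order.TTheory GRing.Theory Num.Theory.
Local Open Scope ring_scope.

(* Let e0 be the link of L (among those at least as long as e) whose receiver
   is closest to the sender of e.  For every other such link x, the triangle
   inequality puts s_x within d_x + 2 d(s_e, r_x) of r_{e0}; combined with the
   bucket condition (all S within a factor 2) and gamma <= beta (1+eps)/eps
   this gives abar_e(x) <= K S_{x e0} / S_{e0} for a constant K.  Summing
   and using the SINR-feasibility of e0 bounds the total by K / beta, and
   e0 itself contributes at most 1. *)

Lemma dist_sym (R : realType) (p q : R * R) : dist p q = dist q p.
Proof.
by rewrite /dist; congr Num.sqrt; rewrite -sqrrN opprB -[X in _ + X]sqrrN opprB.
Qed.

Lemma dist_triangle (R : realType) (p m q : R * R) :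
  dist p q <= dist p m + dist m q.
Proof.
rewrite /dist.
set a := p.1 - m.1; set b := p.2 - m.2; set c := m.1 - q.1; set d := m.2 - q.2.
have -> : p.1 - q.1 = a + c by rewrite /a /c; ring.
have -> : p.2 - q.2 = b + d by rewrite /b /d; ring.
set Y := a ^+ 2 + b ^+ 2; set Z := c ^+ 2 + d ^+ 2.
have Y0 : 0 <= Y by rewrite /Y; nra.
have Z0 : 0 <= Z by rewrite /Z; nra.
have hs : 0 <= Num.sqrt Y + Num.sqrt Z by rewrite addr_ge0 ?sqrtr_ge0.
rewrite -[X in _ <= X]ger0_norm // -sqrtr_sqr ler_sqrt ?sqr_ge0 //.
have cauchy_schwarz : a * c + b * d <= Num.sqrt Y * Num.sqrt Z.
  have [h|h] := lerP (a * c + b * d) 0.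
    by apply: le_trans h _; rewrite mulr_ge0 ?sqrtr_ge0.
  rewrite -sqrtrM // -[X in X <= _]ger0_norm; last exact: ltW.
  rewrite -sqrtr_sqr ler_sqrt ?mulr_ge0 //.
  have lagrange : Y * Z - (a * c + b * d) ^+ 2 = (a * d - b * c) ^+ 2.
    by rewrite /Y /Z; ring.
  have := sqr_ge0 (a * d - b * c); rewrite -lagrange; lra.
have eY := sqr_sqrtr Y0; have eZ := sqr_sqrtr Z0.
have -> : (Num.sqrt Y + Num.sqrt Z) ^+ 2 = Y + Z + 2 * (Num.sqrt Y * Num.sqrt Z).
  by rewrite sqrrD eY eZ -mulr_natr; ring.
have -> : (a + c) ^+ 2 + (b + d) ^+ 2 = Y + Z + 2 * (a * c + b * d).
  by rewrite /Y /Z; ring.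
lra.
Qed.

Lemma min1_mulr_le (R : realType) (x y : R) : 0 <= x -> 0 <= y ->
  Num.min 1 (x * y) <= (1 + x) * Num.min 1 y.
Proof.
move=> x0 y0; have [y1|y1] := lerP 1 y.
  have hm : 1 <= Num.min 1 y by rewrite le_min lexx y1.
  have : Num.min 1 (x * y) <= 1 by rewrite ge_min lexx.
  nra.
have hm : y <= Num.min 1 y by rewrite le_min lexx (ltW y1).
have : Num.min 1 (x * y) <= x * y by rewrite ge_min lexx orbT.
nra.
Qed.

(* Either D <= 3 rho, and the left-hand side is at most (dl / rho)^a, or
   D <= 3 d, and the right-hand side is at least 1. *)
Lemma min1_powR_ratio_le (R : realType) (a dl d rho D : R) : 0 <= a ->
  0 < dl -> dl <= d -> 0 < rho -> 0 < D -> D <= d + 2 * rho ->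
  Num.min 1 (dl `^ a / rho `^ a) <= 3 `^ a * (d `^ a / D `^ a).
Proof.
move=> a0 dl0 dld rho0 D0 Dle.
have pD : 0 < D `^ a by rewrite powR_gt0.
have prho : 0 < rho `^ a by rewrite powR_gt0.
have powR_le x y : 0 <= x -> x <= y -> x `^ a <= y `^ a.
  by move=> x0 xy; apply: ge0_ler_powR; rewrite ?nnegrE //; apply: le_trans xy.
rewrite mulrA -powRM //; last lra.
have [d_rho|rho_d] := lerP d rho.
  apply: le_trans (_ : _ <= dl `^ a / rho `^ a) _; first by rewrite ge_min lexx orbT.
  rewrite ler_pdivrMr // mulrAC ler_pdivlMr //.
  have h1 : dl `^ a <= d `^ a by apply: powR_le; lra.
  have h2 : D `^ a <= (3 * rho) `^ a by apply: powR_le; lra.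
  rewrite powRM; try lra. rewrite powRM in h2; try lra.
  have := powR_ge0 3 a; have := powR_ge0 d a; have := powR_ge0 dl a.
  nra.
apply: le_trans (_ : _ <= 1) _; first by rewrite ge_min lexx.
rewrite ler_pdivlMr // mul1r; apply: powR_le; lra.
Qed.

Lemma threshold_gain_bounds (R : realType) (beta eps N S : R) :
  0 < beta -> 0 < eps -> 0 < N -> (1 + eps) * beta <= S / N ->
  0 <= beta * S / (S - beta * N) <= beta * (1 + eps) / eps.
Proof.
move=> b0 eps0 N0; rewrite ler_pdivlMr // => hS.
have ebN : 0 < eps * beta * N by rewrite !mulr_gt0.
have gap : 0 < S - beta * N.
  by move: hS; rewrite mulrDl mulrDl mul1r -mulrA; lra.
have S0 : 0 <= S by have := mulr_gt0 b0 N0; lra.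
apply/andP; split; first by rewrite divr_ge0 ?mulr_ge0 // ltW.
rewrite ler_pdivrMr // mulrAC ler_pdivlMr //.
nra.
Qed.

Section OneBucket.
Variables (R : realType) (T : finType) (alpha beta N : R).
Variables (s r : T -> R * R) (P : T -> R).
Hypotheses (alpha_ge0 : 0 <= alpha) (beta_gt0 : 0 < beta) (N_gt0 : 0 < N).
Hypothesis P_gt0 : forall e, 0 < P e.
Hypothesis dist_gt0 : forall e e', 0 < dist (s e') (r e).

Local Notation d := (dlen s r).
Local Notation S := (Ssig alpha s r P).
Local Notation Sint := (Sint alpha s r P).

Lemma Ssig_gt0 e : 0 < S e.
Proof. by rewrite /Ssig /dlen divr_gt0 ?powR_gt0. Qed.

Lemma Sint_ge0 e' e : 0 <= Sint e' e.
Proof. by rewrite /Sint divr_ge0 ?powR_ge0 // ltW. Qed.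

Lemma Sint_Ssig e' e :
  Sint e' e = S e' * (d e' `^ alpha / dist (s e') (r e) `^ alpha).
Proof.
rewrite /Sint /Ssig mulrA divfK // gt_eqF // powR_gt0 //.
exact: dist_gt0.
Qed.

Lemma bucket_Ssig_le i x y : x \in bucket alpha s r P i ->
  y \in bucket alpha s r P i -> S x <= 2 * S y.
Proof.
rewrite !inE => /andP[_ hx] /andP[hy _].
by rewrite exprS -mulrA in hx; nra.
Qed.

Lemma feasible_interference_le L e0 : feasible alpha beta N s r P L ->
  e0 \in L -> \sum_(x in L | x != e0) Sint x e0 / S e0 <= beta^-1.
Proof.
move=> feas e0L; have := feas e0 e0L; rewrite -mulr_suml.
set I := \sum_(x in L | x != e0) Sint x e0.
have I0 : 0 <= I by apply: sumr_ge0 => x _; apply: Sint_ge0.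
have S0 := Ssig_gt0 e0.
have NI0 : 0 < N + I by rewrite ltr_wpDr.
rewrite ler_pdivlMr // mulrDr => hb.
rewrite ler_pdivrMr // [beta^-1 * _]mulrC ler_pdivlMr // mulrC.
have := mulr_gt0 beta_gt0 N_gt0; lra.
Qed.

Variable g : R.
Hypothesis gammae_bound : forall x, 0 <= gammae alpha beta N s r P x <= g.

Variables (i : nat) (L : {set T}) (e e0 : T).
Hypothesis L_bucket : L \subset bucket alpha s r P i.
Hypothesis L_feasible : feasible alpha beta N s r P L.
Hypotheses (e_bucket : e \in bucket alpha s r P i) (e0L : e0 \in L).
Hypothesis e0_closest : forall x, x \in L -> d e <= d x ->
  dist (s e) (r e0) <= dist (s e) (r x).

Local Notation rho x := (dist (s e) (r x)).

Lemma aff_le x : x \in bucket alpha s r P i ->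
  aff alpha beta N s r P e x <= 2 * g * (d e `^ alpha / rho x `^ alpha).
Proof.
move=> xB; have [gx0 gxg] := andP (gammae_bound x).
have q0 : 0 <= S e / S x by rewrite divr_ge0 // ltW ?Ssig_gt0.
have q2 : S e / S x <= 2 by rewrite ler_pdivrMr ?Ssig_gt0 // (bucket_Ssig_le e_bucket).
have -> : aff alpha beta N s r P e x =
    gammae alpha beta N s r P x * (S e / S x) * (d e `^ alpha / rho x `^ alpha).
  by rewrite /aff /ahat Sint_Ssig; ring.
apply: ler_wpM2r; first by rewrite divr_ge0 ?powR_ge0.
by rewrite mulrC; apply: ler_pM.
Qed.

Lemma abar_le_interference x : x \in L -> d e <= d x ->
  abar alpha beta N s r P e x <=
    2 * 3 `^ alpha * (1 + 2 * g) * (Sint x e0 / S e0).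
Proof.
move=> xL dex; have xB := fintype.subsetP L_bucket x xL.
have e0B := fintype.subsetP L_bucket e0 e0L.
have [gamma0 gamma_g] := andP (gammae_bound x).
set u := d e `^ alpha / rho x `^ alpha.
set w := d x `^ alpha / dist (s x) (r e0) `^ alpha.
have u0 : 0 <= u by rewrite divr_ge0 ?powR_ge0.
have near_far : dist (s x) (r e0) <= d x + 2 * rho x.
  have h1 := dist_triangle (s x) (r x) (r e0).
  have h2 := dist_triangle (r x) (s e) (r e0).
  have h3 := e0_closest xL dex.
  rewrite (dist_sym (r x) (s e)) /dlen in h2 *; lra.
have abar_u : abar alpha beta N s r P e x <= (1 + 2 * g) * Num.min 1 u.
  apply: le_trans (min1_mulr_le _ u0); last by rewrite mulr_ge0 //; lra.
  by rewrite /abar le_min ge_min lexx /= (le_trans _ (aff_le xB)) ?ge_min ?lexx ?orbT.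
have u_w : Num.min 1 u <= 3 `^ alpha * w.
  exact: min1_powR_ratio_le (dist_gt0 e e) dex (dist_gt0 _ _) (dist_gt0 _ _) near_far.
have w_I : w <= 2 * (Sint x e0 / S e0).
  have Sx0 := Ssig_gt0 x; have S00 := Ssig_gt0 e0.
  have w0 : 0 <= w by rewrite divr_ge0 ?powR_ge0.
  have := ler_wpM2l w0 (bucket_Ssig_le e0B xB).
  rewrite Sint_Ssig -/w mulrA ler_pdivlMr //; nra.
have -> : 2 * 3 `^ alpha * (1 + 2 * g) * (Sint x e0 / S e0) =
    (1 + 2 * g) * (3 `^ alpha * (2 * (Sint x e0 / S e0))) by ring.
apply: le_trans abar_u _; apply: ler_wpM2l; first lra.
by apply: le_trans u_w _; apply: ler_wpM2l; first exact: powR_ge0.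
Qed.

Lemma sum_abar_far_le :
  \sum_(x | (x \in L) && (d e <= d x) && (x != e0)) abar alpha beta N s r P e x
    <= 2 * 3 `^ alpha * (1 + 2 * g) / beta.
Proof.
have [gamma0 gamma_g] := andP (gammae_bound e).
have K0 : 0 <= 2 * 3 `^ alpha * (1 + 2 * g) by rewrite !mulr_ge0 ?powR_ge0 //; lra.
apply: le_trans (_ : _ <= \sum_(x in L | x != e0)
    2 * 3 `^ alpha * (1 + 2 * g) * (Sint x e0 / S e0)) _.
  rewrite big_mkcond [X in _ <= X]big_mkcond /=; apply: ler_sum => x _.
  case: (x \in L) / idP => xL //=; case: (d e <= d x) / idP => dex /=.
    by case: (x != e0) => //; apply: abar_le_interference.
  case: (x != e0) => //; rewrite mulr_ge0 // divr_ge0 ?Sint_ge0 //.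
by rewrite -mulr_sumr ler_wpM2l // feasible_interference_le.
Qed.

End OneBucket.

Theorem theorem2 (R : realType) (alpha beta eps : R) :
  0 <= alpha -> 0 < beta -> 0 < eps ->
  exists C : R,
    forall (N : R) (T : finType) (s r : T -> R * R) (P : T -> R),
      0 < N ->
      (* distinct elements of T are distinct links *)
      (forall e1 e2, s e1 = s e2 -> r e1 = r e2 -> P e1 = P e2 -> e1 = e2) ->
      (forall e, 0 < P e) ->
      (* no transmitter sits on a receiver (all distances in the model are > 0) *)
      (forall e e', 0 < dist (s e') (r e)) ->
      (* standing assumption: S_e / N >= (1 + eps) beta *)
      (forall e, (1 + eps) * beta <= Ssig alpha s r P e / N) ->
      forall (i : nat) (L : {set T}),
        L \subset bucket alpha s r P i ->
        feasible alpha beta N s r P L ->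
        forall e, e \in bucket alpha s r P i ->
          \sum_(e' in L | dlen s r e <= dlen s r e')
             abar alpha beta N s r P e e' <= C.
Proof.
move=> alpha_ge0 beta_gt0 eps_gt0.
set g := beta * (1 + eps) / eps.
have g0 : 0 <= g by rewrite divr_ge0 ?mulr_ge0 //; lra.
exists (1 + 2 * 3 `^ alpha * (1 + 2 * g) / beta).
move=> N T s r P N_gt0 _ P_gt0 dist_gt0 standing i L L_bucket feas e e_bucket.
have gammae_bound x : 0 <= gammae alpha beta N s r P x <= g.
  exact: threshold_gain_bounds (standing x).
pose far x := (x \in L) && (dlen s r e <= dlen s r x).
have [x0 far_x0|no_far] := pickP far; last first.
  rewrite big_pred0 // addr_ge0 // divr_ge0 ?mulr_ge0 ?powR_ge0 //; lra.
have [e0 far_e0 e0_closest] := arg_minP (fun x => dist (s e) (r x)) far_x0.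
rewrite (bigD1 e0) //=; apply: lerD; first by rewrite /abar ge_min lexx.
have /andP[e0L _] := far_e0.
apply: (sum_abar_far_le alpha_ge0 beta_gt0 N_gt0 P_gt0 dist_gt0 gammae_bound
  L_bucket feas e_bucket e0L) => x xL dex.
by apply: e0_closest; rewrite /far xL dex.
Qed.
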